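(* For every proper caterpillar $T$ and every $\beta\in\Phi(T)$, \[U^L_T(\mathbf{x})=\mathcal{L}(\beta,\mathbf{x}).\]
   Context: Let $\mathbf{x}=x_1,x_2,\ldots$ be commuting indeterminates; for a partition $\lambda=\lambda_1\cdots\lambda_l$ put $\mathbf{x}_\lambda=x_{\lambda_1}\cdots x_{\lambda_l}$. A composition is a finite nonempty sequence of positive integers; the type $\lambda(\alpha)$ of a composition $\alpha$ is the partition obtained by sorting its parts in weakly decreasing order. A composition $\alpha$ is a coarsening of $\beta$, written $\alpha\succeq\beta$, if $\alpha$ is obtained from $\beta$ by summing blocks of consecutive parts (i.e. there are indices $1=j_0<j_1<\cdots<j_{i+1}=\ell(\beta)+1$ with $\alpha_r=\beta_{j_{r-1}}+\cdots+\beta_{j_r-1}$). The $\mathcal{L}$-polynomial is $\mathcal{L}(\beta,\mathbf{x})=\sum_{\alpha\succeq\beta}\mathbf{x}_{\lambda(\alpha)}$. A caterpillar is a tree in which the internal (non-leaf) vertices induce a non-trivial path (the spine), with $L(T)$ the set of non-spine edges; it is proper if every internal vertex is adjacent to a leaf. For $A\subseteq E(T)$, $\lambda(A)$ is the partition formed by the sizes of the components of $(V(T),A)$, and $U^L_T(\mathbf{x})=\sum_{A\subseteq E(T),\,L(T)\subseteq A}\mathbf{x}_{\lambda(A)}$. For a proper caterpillar with spine $v_1\cdots v_k$, let $\beta_i$ be the number of vertices of the component of $(V(T),L(T))$ containing $v_i$, and $\Phi(T)=\{\beta_1\cdots\beta_k,\ \beta_k\cdots\beta_1\}$. *)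

From mathcomp Require Import all_boot all_order all_algebra.
Set Implicit Arguments. Unset Strict Implicit. Unset Printing Implicit Defensive.
Import GRing.Theory.
Local Open Scope ring_scope.

Section Graphs.
Variable V : finType.
Variable e : rel V.

Definition simple_graph := symmetric e /\ irreflexive e.

Definition edges : {set {set V}} := [set [set p.1; p.2] | p : V * V & e p.1 p.2].

Definition connected := forall x y : V, connect e x y.

Definition acyclic := forall c : seq V, uniq c -> (3 <= size c)%N -> ~~ cycle e c.

Definition is_tree := connected /\ acyclic.

Definition degree (v : V) : nat := #|[set u | e v u]|.
Definition is_leaf (v : V) : bool := degree v == 1%N.
Definition is_internal (v : V) : bool := ~~ is_leaf v.

(* s = v_1 ... v_k is a spine: the internal vertices induce the non-trivial
   path v_1 ... v_k (k >= 2) *)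
Definition is_spine (s : seq V) : Prop :=
  [/\ uniq s, (2 <= size s)%N,
      (forall v, (v \in s) = is_internal v),
      (forall (x0 : V) (i : nat), (i.+1 < size s)%N ->
          e (nth x0 s i) (nth x0 s i.+1)) &
      (forall x y, x \in s -> y \in s -> e x y ->
          (index y s == (index x s).+1) || (index x s == (index y s).+1))].

Definition caterpillar := exists s, is_spine s.

Definition proper_caterpillar :=
  caterpillar /\ forall v, is_internal v -> exists2 u, e v u & is_leaf u.

Definition leaf_edges : {set {set V}} :=
  [set f in edges | ~~ (f \subset [set v | is_internal v])].

Definition edge_rel (A : {set {set V}}) : rel V := fun x y => [set x; y] \in A.

Definition component (A : {set {set V}}) (v : V) : {set V} :=
  [set y | connect (edge_rel A) v y].

Definition components (A : {set {set V}}) : {set {set V}} :=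
  [set component A v | v : V].

Definition xA (R : comNzRingType) (x : nat -> R) (A : {set {set V}}) : R :=
  \prod_(C in components A) x #|C|.

Definition UL (R : comNzRingType) (x : nat -> R) : R :=
  \sum_(A : {set {set V}} | (A \subset edges) && (leaf_edges \subset A)) xA x A.

Definition spine_comp (s : seq V) : seq nat :=
  [seq #|component leaf_edges v| | v <- s].

Definition Phi (beta : seq nat) : Prop :=
  exists2 s, is_spine s & (beta = spine_comp s \/ beta = rev (spine_comp s)).

End Graphs.

(* coarsening: alpha is obtained from beta by summing blocks of consecutive
   parts.  0-indexed version of the cut indices 1 = j_0 < ... < j_{i+1} = l(beta)+1:
   J = [:: J_0; ...; J_{size alpha}] with 0 = J_0 < ... < J_{size alpha} = size beta
   and alpha_r = beta_{J_r} + ... + beta_{J_{r+1}-1}.  All such J have entries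
   <= size beta, so the existential ranges over a finite type. *)
Definition coarsening_by (alpha beta Js : seq nat) : bool :=
  [&& sorted ltn Js, size Js == (size alpha).+1, nth 0 Js 0 == 0%N,
      nth 0 Js (size alpha) == size beta &
      all (fun r => nth 0 alpha r ==
                    (\sum_(nth 0 Js r <= t < nth 0 Js r.+1) nth 0 beta t)%N)
          (iota 0 (size alpha))].

Definition coarsening (alpha beta : seq nat) : bool :=
  [exists J : {ffun 'I_(size alpha).+1 -> 'I_(size beta).+1},
     coarsening_by alpha beta [seq val (J i) | i <- enum 'I_(size alpha).+1]].

Definition ptype (alpha : seq nat) : seq nat := sort geq alpha.

Definition xpart (R : comNzRingType) (x : nat -> R) (lam : seq nat) : R :=
  \prod_(a <- lam) x a.

(* Every coarsening of beta is a sequence of length l <= n := sumn beta with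
   entries in [1, n]; it is enumerated exactly once as a finite function
   'I_l -> 'I_(n.+1). *)
Definition Lpoly (R : comNzRingType) (x : nat -> R) (beta : seq nat) : R :=
  let n := sumn beta in
  \sum_(l < n.+1)
    \sum_(t : {ffun 'I_l -> 'I_n.+1} | coarsening [seq val (t i) | i <- enum 'I_l] beta)
      xpart x (ptype [seq val (t i) | i <- enum 'I_l]).

From mathcomp Require Import all_boot all_order all_algebra.
From mathcomp Require Import zify.
Set Implicit Arguments. Unset Strict Implicit. Unset Printing Implicit Defensive.

(* An edge set A with L(T) <= A <= E(T) is
   L(T) together with a choice of spine edges, i.e. a choice of "cuts"
   c in {0,1}^(k-1) (the spine edges left out). The components of (V(T), A)
   are the unions of the leaf-edge components of consecutive spine vertices
   between two cuts, so lambda(A) is the type of the composition of block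
   sums of beta for the cuts c. Conversely every coarsening of beta is the
   block-sum composition for exactly one c, since all parts of beta are
   positive. Reversing the spine gives the case beta_k ... beta_1. *)

Lemma all_iota0P (P : pred nat) n :
  reflect (forall r, r < n -> P r) (all P (iota 0 n)).
Proof. by apply: (iffP allP) => P_iota r; have := P_iota r; rewrite mem_iota. Qed.

Lemma big_nat_shift1 m n (F : nat -> nat) :
  (\sum_(m.+1 <= i < n.+1) F i = \sum_(m <= i < n) F i.+1)%N.
Proof. by rewrite -addn1 big_addn subn1; apply: eq_bigr => i _; rewrite addn1. Qed.

Lemma sorted_ltn_0S (J : seq nat) : sorted ltn (0 :: map S J) = sorted ltn J.
Proof. by case: J => //= j J; rewrite path_map. Qed.

Lemma path_ltn0_mapS (s : seq nat) : path ltn 0 s -> s = map S (map predn s).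
Proof.
move=> /(order_path_min ltn_trans); elim: s => //= y s IH /andP[y_gt0 s_gt0].
by rewrite prednK // -IH.
Qed.

Lemma coarsening_byP alpha beta Js : coarsening_by alpha beta Js <->
  [/\ sorted ltn Js, size Js = (size alpha).+1, nth 0 Js 0 = 0,
      nth 0 Js (size alpha) = size beta &
      forall r, r < size alpha -> nth 0 alpha r =
        (\sum_(nth 0 Js r <= t < nth 0 Js r.+1) nth 0 beta t)%N].
Proof.
split=> [/and5P[Js_sorted /eqP Js_size /eqP Js0 /eqP Js_last /all_iota0P alphaE]|].
  by split=> // r /alphaE /eqP.
case=> Js_sorted Js_size Js0 Js_last alphaE.
apply/and5P; split=> //; try exact/eqP.
by apply/all_iota0P => r /alphaE ->.
Qed.

Lemma coarsening_by_cons a0 alpha beta J :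
  coarsening_by (a0 :: alpha) beta (0 :: map S J) <->
  [/\ sorted ltn J, size J = (size alpha).+1, (nth 0 J (size alpha)).+1 = size beta,
      a0 = (\sum_(0 <= t < (nth 0 J 0).+1) nth 0 beta t)%N &
      forall r, r < size alpha -> nth 0 alpha r =
        (\sum_((nth 0 J r).+1 <= t < (nth 0 J r.+1).+1) nth 0 beta t)%N].
Proof.
rewrite coarsening_byP sorted_ltn_0S /= size_map.
split=> [[J_sorted [J_size] _ J_last alphaE] | [J_sorted J_size J_last a0E alphaE]].
  rewrite (nth_map 0) ?J_size // in J_last.
  split=> //; first by have := alphaE 0 isT; rewrite /= (nth_map 0) ?J_size.
  move=> r r_lt; have := alphaE r.+1; rewrite ltnS r_lt /= => /(_ isT) ->.
  by rewrite !(nth_map 0) ?J_size // ltnW.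
split; rewrite ?J_size ?(nth_map 0) ?J_size //; case=> [|r] r_lt //=.
  by rewrite (nth_map 0) ?J_size.
by rewrite alphaE // !(nth_map 0) ?J_size // ltnW.
Qed.

Lemma coarsening_by_shape alpha beta Js :
  coarsening_by alpha beta Js -> 0 < size beta ->
  exists a0 alpha' J, alpha = a0 :: alpha' /\ Js = 0 :: map S J.
Proof.
case/coarsening_byP=> Js_sorted Js_size Js0 Js_last _ beta_gt0.
case: alpha Js_size Js_last => [|a0 alpha] Js_size Js_last.
  by move: beta_gt0; rewrite -Js_last Js0.
case: Js Js_sorted Js_size Js0 {Js_last} => // j0 Js Js_sorted _ /= j0E.
by exists a0, alpha, (map predn Js); rewrite -path_ltn0_mapS // -j0E.
Qed.

Lemma coarsening_by_cut a0 alpha b beta J : nth 0 J 0 = 0 ->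
  coarsening_by (a0 :: alpha) (b :: beta) (0 :: map S J) <->
  a0 = b /\ coarsening_by alpha beta J.
Proof.
move=> J0; rewrite coarsening_by_cons J0 big_nat1 /= coarsening_byP.
split=> [[J_sorted J_size [J_last] -> alphaE] | [-> [J_sorted J_size _ J_last alphaE]]].
  by split=> //; split=> // r /alphaE ->; rewrite big_nat_shift1.
by split=> [|||| r /alphaE ->]; rewrite ?J_last ?big_nat_shift1.
Qed.

Lemma sum_nth_merge b1 b2 beta n :
  (\sum_(0 <= t < n.+2) nth 0 [:: b1, b2 & beta] t =
   \sum_(0 <= t < n.+1) nth 0 (b1 + b2 :: beta) t)%N.
Proof. by rewrite !big_nat_recl //= addnA. Qed.

Lemma coarsening_by_merge a0 alpha b1 b2 beta J :
  coarsening_by (a0 :: alpha) [:: b1, b2 & beta] (0 :: map S (map S J)) <->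
  coarsening_by (a0 :: alpha) (b1 + b2 :: beta) (0 :: map S J).
Proof.
rewrite !coarsening_by_cons sorted_map size_map.
split=> -[J_sorted J_size J_last a0E alphaE].
  rewrite !(nth_map 0) ?J_size // in J_last a0E.
  split=> //; first by move: J_last => [->].
    by rewrite a0E sum_nth_merge.
  by move=> r r_lt; rewrite alphaE // !(nth_map 0) ?J_size ?big_nat_shift1 // ltnW.
rewrite !(nth_map 0) ?J_size //; split=> //; first by rewrite J_last.
  by rewrite a0E sum_nth_merge.
by move=> r r_lt; rewrite alphaE // !(nth_map 0) ?J_size ?big_nat_shift1 // ltnW.
Qed.

Fixpoint coarsen (a : nat) (beta : seq nat) (c : seq bool) : seq nat :=
  match beta, c with
  | b :: beta', cut :: c' =>
      if cut then a :: coarsen b beta' c' else coarsen (a + b) beta' c'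
  | _, _ => [:: a]
  end.

Fixpoint bitseqs (m : nat) : seq (seq bool) :=
  if m is m'.+1 then map (cons true) (bitseqs m') ++ map (cons false) (bitseqs m')
  else [:: [::]].

Lemma mem_bitseqs m c : (c \in bitseqs m) = (size c == m).
Proof.
elim: m c => [|m IH] [|b c] //=; rewrite mem_cat.
  by apply/negP => /orP[] /mapP[].
rewrite eqSS -IH; apply/orP/idP => [[] /mapP[c' c'_in [_ ->]] // | c_in].
by case: b; [left | right]; apply/mapP; exists c.
Qed.

Lemma uniq_bitseqs m : uniq (bitseqs m).
Proof.
elim: m => //= m IH; rewrite cat_uniq !map_inj_uniq ?IH //; try by move=> ? ? [].
by rewrite andbT; apply/hasPn => _ /mapP[c _ ->]; apply/negP => /mapP[? _ []].
Qed.

Lemma big_tuple_bitseqs (R : Type) (idx : R) (op : Monoid.com_law idx) m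
    (F : seq bool -> R) :
  \big[op/idx]_(t : m.-tuple bool) F t = \big[op/idx]_(c <- bitseqs m) F c.
Proof.
rewrite -(big_map val xpredT F); apply/perm_big/uniq_perm.
- by rewrite map_inj_uniq ?index_enum_uniq //; apply: val_inj.
- exact: uniq_bitseqs.
move=> c; rewrite mem_bitseqs; apply/mapP/idP => [[t _ ->] | c_size].
  by rewrite size_tuple.
by exists (Tuple c_size); rewrite ?mem_index_enum.
Qed.

Definition coarsenings (a : nat) (beta : seq nat) : seq (seq nat) :=
  map (coarsen a beta) (bitseqs (size beta)).

Lemma coarsenings_cons a b beta :
  coarsenings a (b :: beta) =
  map (cons a) (coarsenings b beta) ++ coarsenings (a + b) beta.
Proof. by rewrite /coarsenings /= map_cat -!map_comp. Qed.

Lemma mem_coarsenings_by a beta alpha :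
  alpha \in coarsenings a beta <-> exists Js, coarsening_by alpha (a :: beta) Js.
Proof.
elim: beta a alpha => [|b beta IH] a alpha.
  rewrite inE; split=> [/eqP -> | [Js alpha_Js]].
    by exists (0 :: map S [:: 0]); apply/coarsening_by_cut.
  have [a0 [alpha' [J [? ?]]]] := coarsening_by_shape alpha_Js isT; subst alpha Js.
  case/coarsening_by_cons: alpha_Js => J_sorted J_size [J_last] a0E _.
  case: alpha' J_size J_last => [|a1 alpha'] J_size J_last.
    by rewrite a0E J_last big_nat1.
  have : nth 0 J 0 < nth 0 J (size (a1 :: alpha')).
    by apply: (sorted_ltn_nth ltn_trans) => //; rewrite inE J_size.
  by rewrite J_last.
rewrite coarsenings_cons mem_cat; split.
  case/orP=> [/mapP[alpha' /IH[J alpha'_J] ->] | /IH[Js alpha_Js]].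
    exists (0 :: map S J); apply/coarsening_by_cut => //.
    by case/coarsening_byP: alpha'_J.
  have [a0 [alpha' [J [? ?]]]] := coarsening_by_shape alpha_Js isT; subst alpha Js.
  by exists (0 :: map S (map S J)); apply/coarsening_by_merge.
case=> Js alpha_Js.
have [a0 [alpha' [J [? ?]]]] := coarsening_by_shape alpha_Js isT; subst alpha Js.
have [J_sorted _ _ _ _] := iffLR (coarsening_by_cons _ _ _ _) alpha_Js.
case J0 : (nth 0 J 0) => [|j0].
  case/coarsening_by_cut: alpha_Js => // -> alpha'_J.
  by apply/orP; left; apply/mapP; exists alpha' => //; apply/IH; exists J.
have J_def : J = map S (map predn J).
  by apply: path_ltn0_mapS; case: (J) J_sorted J0 => //= j J' -> ->.
move: alpha_Js; rewrite J_def => /coarsening_by_merge alpha_Js.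
by apply/orP; right; apply/IH; exists (0 :: map S (map predn J)).
Qed.

Lemma coarseningP alpha beta :
  coarsening alpha beta <-> exists Js, coarsening_by alpha beta Js.
Proof.
split=> [/existsP[J alpha_J] | [Js alpha_Js]]; first by eexists; apply: alpha_J.
have /coarsening_byP[Js_sorted Js_size _ Js_last _] := alpha_Js.
have Js_le i : i < size Js -> nth 0 Js i <= size beta.
  move=> i_lt; rewrite -Js_last; apply: (sorted_leq_nth leq_trans leqnn) => //.
  - by apply: sub_sorted Js_sorted => m n /ltnW.
  - by rewrite inE Js_size.
  - by rewrite -ltnS -Js_size.
apply/existsP; exists [ffun i : 'I_(size alpha).+1 => inord (nth 0 Js i)].
congr coarsening_by: alpha_Js; apply: (@eq_from_nth _ 0).
  by rewrite size_map size_enum_ord.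
move=> i; rewrite Js_size => i_lt.
rewrite (nth_map ord0) ?size_enum_ord // ffunE nth_enum_ord //=.
by rewrite inordK // ltnS Js_le // Js_size.
Qed.

Lemma mem_coarsenings a beta alpha :
  alpha \in coarsenings a beta <-> coarsening alpha (a :: beta).
Proof. by rewrite mem_coarsenings_by coarseningP. Qed.

Lemma leq_head_coarsen a beta c : a <= nth 0 (coarsen a beta c) 0.
Proof.
elim: beta a c => [|b beta IH] a [|[] c] //=.
exact: leq_trans (leq_addr _ _) (IH _ _).
Qed.

Lemma coarsen_gt0 a beta c : 0 < a -> all (leq 1) beta -> all (leq 1) (coarsen a beta c).
Proof.
elim: beta a c => [|b beta IH] a c a_gt0; first by case: c; rewrite /= a_gt0.
case/andP=> b_gt0 beta_gt0; case: c => [|[] c] /=; rewrite ?a_gt0 ?IH //.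
by rewrite addn_gt0 a_gt0.
Qed.

Lemma sumn_coarsen a beta c : sumn (coarsen a beta c) <= a + sumn beta.
Proof.
elim: beta a c => [|b beta IH] a [|[] c] //=; rewrite ?addn0 ?leq_addr //.
  by rewrite leq_add2l IH.
by rewrite addnA IH.
Qed.

Lemma uniq_coarsenings a beta : 0 < a -> all (leq 1) beta -> uniq (coarsenings a beta).
Proof.
elim: beta a => [|b beta IH] a a_gt0 //= /andP[b_gt0 beta_gt0].
rewrite coarsenings_cons cat_uniq map_inj_uniq; last by move=> ? ? [].
rewrite !IH ?addn_gt0 ?a_gt0 //= andbT.
apply/hasPn => _ /mapP[c _ ->]; apply/negP => /mapP[alpha _ alphaE].
have := leq_head_coarsen (a + b) beta c; rewrite alphaE /=.
by rewrite -{2}(addn0 a) leq_add2l leqNgt b_gt0.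
Qed.

Lemma size_leq_sumn (s : seq nat) : all (leq 1) s -> size s <= sumn s.
Proof. by elim: s => //= a s IH /andP[a_gt0 /IH]; rewrite -add1n; apply: leq_add. Qed.

Lemma mem_leq_sumn (s : seq nat) a : a \in s -> a <= sumn s.
Proof.
elim: s => //= b s IH; rewrite inE => /predU1P[-> | /IH]; first exact: leq_addr.
by move/leq_trans; apply; apply: leq_addl.
Qed.

Lemma xpart_ptype (R : comNzRingType) (x : nat -> R) alpha :
  xpart x (ptype alpha) = (\prod_(a <- alpha) x a)%R.
Proof. by apply: perm_big; rewrite perm_sort. Qed.

Lemma Lpoly_seq (R : comNzRingType) (x : nat -> R) beta (C : seq (seq nat)) :
  uniq C -> (forall alpha, alpha \in C <-> coarsening alpha beta) ->
  (forall alpha, alpha \in C -> size alpha <= sumn beta /\ all (leq^~ (sumn beta)) alpha) ->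
  Lpoly x beta = (\sum_(alpha <- C) xpart x (ptype alpha))%R.
Proof.
move=> C_uniq memC C_bounded; rewrite /Lpoly; set n := sumn beta.
set F := fun alpha => xpart x (ptype alpha).
transitivity (\sum_(l < n.+1) \sum_(alpha <- C | size alpha == l) F alpha)%R.
  apply: eq_bigr => l _.
  set sq := fun t : {ffun 'I_l -> 'I_n.+1} => [seq val (t i) | i <- enum 'I_l].
  rewrite -(big_map sq (coarsening^~ beta) F) -big_filter -[RHS]big_filter.
  apply/perm_big/uniq_perm; try exact: filter_uniq.
    apply: filter_uniq; rewrite map_inj_uniq ?index_enum_uniq // => t1 t2.
    move/(congr1 (nth 0 ^~ _)) => t12; apply/ffunP => i; apply: val_inj; have := t12 i.
    by rewrite /sq !(nth_map i) -?enumT ?size_enum_ord ?nth_ord_enum.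
  move=> alpha; rewrite !mem_filter; apply/andP/andP.
    case=> alpha_coarse /mapP[t _ alpha_def]; split; last exact/memC.
    by rewrite alpha_def size_map size_enum_ord.
  case=> /eqP alpha_size alpha_in; split; first exact/memC.
  have [_ /allP alpha_le] := C_bounded _ alpha_in.
  apply/mapP; exists [ffun i : 'I_l => inord (nth 0 alpha i)]; first exact: mem_index_enum.
  apply: (@eq_from_nth _ 0); first by rewrite size_map size_enum_ord.
  move=> i; rewrite alpha_size => i_lt.
  rewrite /sq (nth_map (Ordinal i_lt)) ?size_enum_ord // ffunE /= nth_enum_ord //.
  by rewrite inordK // ltnS alpha_le // mem_nth // alpha_size.
under eq_bigr do rewrite big_mkcond.
rewrite exchange_big /=; apply: eq_big_seq => alpha /C_bounded[alpha_size _].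
by rewrite -big_mkcond /= (big_pred1 (Ordinal (alpha_size : size alpha < n.+1))).
Qed.

Lemma Lpoly_coarsen (R : comNzRingType) (x : nat -> R) a beta :
  0 < a -> all (leq 1) beta ->
  Lpoly x (a :: beta) =
  (\sum_(c <- bitseqs (size beta)) \prod_(y <- coarsen a beta c) x y)%R.
Proof.
move=> a_gt0 beta_gt0; rewrite (@Lpoly_seq _ _ _ (coarsenings a beta)).
- by rewrite big_map; apply: eq_bigr => c _; rewrite xpart_ptype.
- exact: uniq_coarsenings.
- by move=> alpha; rewrite mem_coarsenings.
move=> _ /mapP[c _ ->]; have sum_le := sumn_coarsen a beta c.
split; first exact: leq_trans (size_leq_sumn (coarsen_gt0 c a_gt0 beta_gt0)) sum_le.
by apply/allP => y /mem_leq_sumn y_le; apply: leq_trans sum_le.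
Qed.

(* With the cuts of [coarsen], position [i] lies in block [block_of c i]. *)
Definition block_of (c : seq bool) (i : nat) : nat := count id (take i c).

Definition block_sum (c : seq bool) (f : nat -> nat) (n j : nat) : nat :=
  \sum_(i < n | block_of c i == j) f i.

Lemma block_of0 c : block_of c 0 = 0.
Proof. by case: c. Qed.

Lemma block_of_cons b c i : block_of (b :: c) i.+1 = b + block_of c i.
Proof. by []. Qed.

Lemma block_ofS c i : block_of c i.+1 = block_of c i + nth false c i.
Proof.
rewrite /block_of; case: (ltnP i (size c)) => i_lt.
  by rewrite (take_nth false i_lt) -cats1 count_cat /= addn0.
by rewrite !take_oversize ?nth_default ?addn0 // (leq_trans i_lt).
Qed.

Lemma leq_block_of c : {homo block_of c : i j / i <= j}.
Proof.
move=> i j /subnK <-; elim: (j - i) => // d IH.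
by rewrite addSn block_ofS (leq_trans IH) ?leq_addr.
Qed.

Lemma block_of_size c : block_of c (size c) = count id c.
Proof. by rewrite /block_of take_size. Qed.

Lemma block_of_nseq m i : i <= m -> block_of (nseq m true) i = i.
Proof.
elim: i => [|i IH] i_le; first exact: block_of0.
by rewrite block_ofS IH ?(ltnW i_le) // nth_nseq i_le addn1.
Qed.

Lemma block_of_onto c m j : j <= block_of c m -> exists2 i, i <= m & block_of c i = j.
Proof.
elim: m j => [|m IH] j.
  by rewrite block_of0 leqn0 => /eqP ->; exists 0; rewrite ?block_of0.
case: (leqP j (block_of c m)) => [/IH[i i_le <-] _ | j_gt j_le].
  by exists i; rewrite // (leq_trans i_le).
exists m.+1 => //; apply/eqP; rewrite eqn_leq j_le (leq_trans _ j_gt) //.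
by rewrite block_ofS -addn1 leq_add2l leq_b1.
Qed.

Lemma coarsen_block_sums a beta c : size c = size beta ->
  coarsen a beta c =
  [seq block_sum c (nth 0 (a :: beta)) (size beta).+1 j | j <- iota 0 (count id c).+1].
Proof.
rewrite /block_sum; elim: beta a c => [|b beta IH] a [|cut c] // c_size.
  by rewrite /= big_mkcond big_ord_recl big_ord0 /= addn0.
case: c_size => c_size; case: cut.
  have -> : iota 0 (count id (true :: c)).+1 = 0 :: iota 1 (count id c).+1 by [].
  rewrite [LHS]/= (IH b c c_size) map_cons.
  rewrite [in RHS]big_mkcond big_ord_recl block_of0 big1 //.
  congr (_ :: _); first by rewrite /= addn0.
  rewrite (iotaDl 1 0) -map_comp; apply: eq_map => j /=.
  rewrite add1n [RHS]big_mkcond big_ord_recl /= add0n big_mkcond.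
  by apply: eq_bigr => i _; rewrite /bump /= block_of_cons add1n eqSS.
rewrite [LHS]/= (IH (a + b) c c_size); apply: eq_map => j.
rewrite [LHS]big_mkcond [RHS]big_mkcond !big_ord_recl /= addnA !block_of0.
congr (_ + _); rewrite /bump block_of_cons block_of0.
by case: (0 == j); rewrite ?addn0.
Qed.

Lemma mem_connect_closed (T : finType) (r : rel T) (X : {set T}) a b :
  (forall y z, y \in X -> r y z -> z \in X) -> connect r a b -> a \in X -> b \in X.
Proof.
move=> X_closed /connectP[p + ->]; elim: p a => //= z p IH a /andP[r_az r_p] a_in.
exact: IH r_p (X_closed _ _ a_in r_az).
Qed.

Section ProperCaterpillar.

Variables (V : finType) (e : rel V).
Hypotheses (e_sym : symmetric e) (e_connected : connected e).
Variable s : seq V.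
Hypothesis s_spine : is_spine e s.
Variable x0 : V.

Let k := size s.

Lemma spine_uniq : uniq s. Proof. by case: s_spine. Qed.
Lemma spine_size_gt1 : 1 < k. Proof. by case: s_spine. Qed.
Lemma mem_spine v : (v \in s) = is_internal e v. Proof. by case: s_spine. Qed.

Lemma ltn_spine_pred i : i < k.-1 -> i.+1 < k.
Proof. by have := spine_size_gt1; lia. Qed.

Lemma leq_spine_pred i : i < k -> i <= k.-1.
Proof. by have := spine_size_gt1; lia. Qed.

Definition neighbor (v : V) : V := odflt v [pick w | e v w].

Lemma leaf_neighbor u : u \notin s -> e u (neighbor u) /\ forall w, e u w -> w = neighbor u.
Proof.
rewrite mem_spine /is_internal negbK => /cards1P[w /setP eq_w].
have e_uE z : e u z = (z == w) by have := eq_w z; rewrite !inE.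
rewrite /neighbor; case: pickP => [z | /(_ w)]; last by rewrite e_uE eqxx.
rewrite e_uE => /eqP -> /=; split=> [|y]; first exact: eqxx.
by rewrite e_uE => /eqP.
Qed.

(* Two adjacent leaves would form a connected component of their own. *)
Lemma neighbor_spine u : u \notin s -> neighbor u \in s.
Proof.
move=> u_leaf; apply/negPn/negP => nu_leaf.
have [e_u_nu nuE] := leaf_neighbor u_leaf.
have [_ nnuE] := leaf_neighbor nu_leaf.
have u_nnu : u = neighbor (neighbor u) by apply: nnuE; rewrite e_sym.
have s0_in : nth x0 s 0 \in s by rewrite mem_nth // ltnW // spine_size_gt1.
have : nth x0 s 0 \in [set u; neighbor u].
  apply: (mem_connect_closed _ (e_connected u _)); last by rewrite set21.
  move=> y z; rewrite !inE => /orP[] /eqP -> e_yz.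
    by rewrite -(nuE _ e_yz) eqxx orbT.
  by rewrite u_nnu -(nnuE _ e_yz) eqxx.
rewrite !inE => /orP[] /eqP s0E.
  by rewrite s0E (negbTE u_leaf) in s0_in.
by rewrite s0E (negbTE nu_leaf) in s0_in.
Qed.

Definition anchor (v : V) : V := if v \in s then v else neighbor v.

Definition spine_index (v : V) : nat := index (anchor v) s.

Lemma anchor_spine v : anchor v \in s.
Proof. by rewrite /anchor; case: ifPn => // /neighbor_spine. Qed.

Lemma spine_index_lt v : spine_index v < k.
Proof. by rewrite /spine_index index_mem anchor_spine. Qed.

Lemma spine_index_nth i : i < k -> spine_index (nth x0 s i) = i.
Proof. by move=> i_lt; rewrite /spine_index /anchor mem_nth // index_uniq // spine_uniq. Qed.

Lemma spine_index_neighbor u : u \notin s -> spine_index u = spine_index (neighbor u).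
Proof. by move=> u_leaf; rewrite /spine_index /anchor (negbTE u_leaf) neighbor_spine. Qed.

Lemma nth_spine_index v : nth x0 s (spine_index v) = anchor v.
Proof. by rewrite /spine_index nth_index // anchor_spine. Qed.

Definition spine_edge (i : nat) : {set V} := [set nth x0 s i; nth x0 s i.+1].

Lemma edge_cases x y : e x y ->
  [\/ exists2 i, i < k.-1 & [set x; y] = spine_edge i,
      x \notin s /\ y = neighbor x | y \notin s /\ x = neighbor y].
Proof.
move=> e_xy; have [x_in | x_leaf] := boolP (x \in s); last first.
  by apply: Or32; split=> //; apply: (leaf_neighbor x_leaf).2.
have [y_in | y_leaf] := boolP (y \in s); last first.
  by apply: Or33; split=> //; apply: (leaf_neighbor y_leaf).2; rewrite e_sym.
have [_ _ _ _ /(_ x y x_in y_in e_xy)] := s_spine.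
case/orP=> /eqP idxE; apply: Or31.
  exists (index x s); last by rewrite /spine_edge -idxE !nth_index.
  have : index y s < k by rewrite index_mem.
  by rewrite idxE /k; lia.
exists (index y s); last by rewrite /spine_edge -idxE !nth_index // setUC.
have : index x s < k by rewrite index_mem.
by rewrite idxE /k; lia.
Qed.

Lemma leaf_edgesP f :
  reflect (exists2 u, u \notin s & f = [set u; neighbor u]) (f \in leaf_edges e).
Proof.
apply: (iffP idP).
  rewrite inE => /andP[/imsetP[[x y]]]; rewrite inE /= => e_xy -> not_spine.
  case: (edge_cases e_xy) => [[i i_lt xyE] | [x_leaf ->] | [y_leaf ->]].
  - case/negP: not_spine; apply/subsetP => z; rewrite xyE !inE -mem_spine.
    have si_lt := ltn_spine_pred i_lt.
    by case/orP=> /eqP ->; apply: mem_nth => //; apply: ltnW.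
  - by exists x.
  - by exists y; rewrite // setUC.
case=> u u_leaf ->; rewrite inE; apply/andP; split.
  by apply/imsetP; exists (u, neighbor u); rewrite // inE; case: (leaf_neighbor u_leaf).
apply/negP => /subsetP/(_ u); rewrite !inE eqxx -mem_spine => /(_ isT).
by rewrite (negbTE u_leaf).
Qed.

(* The edge sets [A] with [L(T) \subset A \subset E(T)] are the [cut_edges c],
   where [c`_i] says whether the spine edge [v_i v_(i+1)] is left out. *)
Definition cut_edges (c : seq bool) : {set {set V}} :=
  leaf_edges e :|: [set spine_edge i | i : 'I_k.-1 & ~~ nth false c i].

Lemma leaf_edges_sub_cut_edges c : leaf_edges e \subset cut_edges c.
Proof. exact: subsetUl. Qed.

Lemma cut_edges_block c x y :
  [set x; y] \in cut_edges c -> block_of c (spine_index x) = block_of c (spine_index y).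
Proof.
case/setUP=> [/leaf_edgesP[u u_leaf xyE] | /imsetP[i]].
  have idxE z : z \in [set x; y] -> spine_index z = spine_index (neighbor u).
    by rewrite xyE !inE => /orP[] /eqP -> //; apply: spine_index_neighbor.
  by rewrite (idxE x (set21 _ _)) (idxE y (set22 _ _)).
rewrite inE => ci xyE; have si_lt := ltn_spine_pred (ltn_ord i).
have blockE z : z \in [set x; y] -> block_of c (spine_index z) = block_of c i.
  rewrite xyE !inE => /orP[] /eqP ->; first by rewrite spine_index_nth // ltnW.
  by rewrite spine_index_nth // block_ofS (negbTE ci) addn0.
by rewrite (blockE x (set21 _ _)) (blockE y (set22 _ _)).
Qed.

Lemma edge_rel_sym (A : {set {set V}}) : symmetric (edge_rel A).
Proof. by move=> x y; rewrite /edge_rel setUC. Qed.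

Lemma connect_cut_edges_block c x y : connect (edge_rel (cut_edges c)) x y ->
  block_of c (spine_index x) = block_of c (spine_index y).
Proof.
case/connectP=> p + ->; elim: p x => //= z p IH x /andP[xz p_path].
by rewrite (cut_edges_block xz) IH.
Qed.

Lemma connect_anchor c v : connect (edge_rel (cut_edges c)) v (anchor v).
Proof.
rewrite /anchor; case: ifPn => [_ | v_leaf]; first exact: connect0.
apply/connect1/(subsetP (leaf_edges_sub_cut_edges c)).
by apply/leaf_edgesP; exists v.
Qed.

Lemma connect_spine_block c i j : i <= j -> j < k -> block_of c j = block_of c i ->
  connect (edge_rel (cut_edges c)) (nth x0 s i) (nth x0 s j).
Proof.
elim: j => [|j IH]; first by rewrite leqn0 => /eqP -> _ _; apply: connect0.
rewrite leq_eqVlt ltnS => /predU1P[-> _ _ | i_le j_lt]; first exact: connect0.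
rewrite block_ofS => blockE.
have blockjE : block_of c j = block_of c i.
  by apply/eqP; rewrite eqn_leq -{1}blockE leq_addr (leq_block_of c i_le).
have cj : nth false c j = false.
  by move: blockE; rewrite blockjE -{2}[block_of c i]addn0 => /addnI; case: nth.
apply: connect_trans (IH i_le (ltnW j_lt) blockjE) (connect1 _).
have j_lt' : j < k.-1 by move: j_lt; rewrite /k; lia.
by apply/setUP; right; apply/imsetP; exists (Ordinal j_lt'); rewrite // inE cj.
Qed.

Definition block_vertices (c : seq bool) (j : nat) : {set V} :=
  [set y | block_of c (spine_index y) == j].

Lemma component_cut_edges c v :
  component (cut_edges c) v = block_vertices c (block_of c (spine_index v)).
Proof.
have sym_cut := sym_connect_sym (@edge_rel_sym (cut_edges c)).
apply/setP => y; rewrite !inE; apply/idP/eqP => [/connect_cut_edges_block -> // | blockE].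
have : connect (edge_rel (cut_edges c)) (anchor v) (anchor y).
  rewrite -!nth_spine_index.
  wlog le_vy : v y blockE / spine_index v <= spine_index y.
    move=> W; case: (leqP (spine_index v) (spine_index y)) => [|/ltnW le_yv].
      exact: W.
    by rewrite sym_cut; apply: W (esym blockE) le_yv.
  exact: connect_spine_block le_vy (spine_index_lt y) blockE.
move/(connect_trans (connect_anchor c v))/connect_trans; apply.
by rewrite sym_cut connect_anchor.
Qed.

Section CutEdgeComponents.

Variable c : seq bool.
Hypothesis c_size : size c = k.-1.

Lemma block_vertex_exists j : j <= count id c -> exists v, block_of c (spine_index v) = j.
Proof.
rewrite -block_of_size => /block_of_onto[i i_le <-]; exists (nth x0 s i).
by rewrite spine_index_nth // (leq_ltn_trans i_le) // c_size /k; have := spine_size_gt1; lia.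
Qed.

Lemma block_of_spine_index_lt v : block_of c (spine_index v) < (count id c).+1.
Proof.
by rewrite ltnS -block_of_size leq_block_of // c_size leq_spine_pred ?spine_index_lt.
Qed.

Lemma components_cut_edges :
  components (cut_edges c) = [set block_vertices c j | j : 'I_(count id c).+1].
Proof.
apply/setP => C; apply/imsetP/imsetP => -[v _ ->].
  by rewrite component_cut_edges; exists (Ordinal (block_of_spine_index_lt v)).
have [u uE] := block_vertex_exists (ltn_ord v).
by exists u; rewrite // component_cut_edges uE.
Qed.

Lemma xA_cut_edges (R : comNzRingType) (x : nat -> R) :
  xA x (cut_edges c) = (\prod_(j < (count id c).+1) x #|block_vertices c j|)%R.
Proof.
rewrite /xA components_cut_edges big_imset // => j1 j2 _ _ eq_j12; apply: val_inj.
have [v vE] := block_vertex_exists (ltn_ord j1).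
have : v \in block_vertices c j1 by rewrite inE vE.
by rewrite eq_j12 inE vE => /eqP.
Qed.

End CutEdgeComponents.

Lemma card_block_vertices c j :
  #|block_vertices c j| = block_sum c (fun i => #|[set y | spine_index y == i]|) k j.
Proof.
rewrite -sum1_card (partition_big (fun y => Ordinal (spine_index_lt y))
  (fun i : 'I_k => block_of c i == j)) => [|y]; last by rewrite inE.
apply: eq_bigr => i /= block_i; rewrite -sum1_card; apply: eq_bigl => y.
rewrite !inE -val_eqE /=.
by case: (eqVneq (spine_index y) i) => [->|]; rewrite ?block_i ?andbF.
Qed.

Lemma leaf_edges_cut_all : leaf_edges e = cut_edges (nseq k.-1 true).
Proof.
apply/esym/setUidPl/subsetP => f /imsetP[i].
by rewrite inE nth_nseq ltn_ord.
Qed.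

Lemma component_leaf_edges i : i < k ->
  component (leaf_edges e) (nth x0 s i) = [set y | spine_index y == i].
Proof.
move=> i_lt; rewrite leaf_edges_cut_all component_cut_edges spine_index_nth //.
apply/setP => y; rewrite !inE.
by rewrite !block_of_nseq ?leq_spine_pred ?spine_index_lt.
Qed.

Lemma nth_spine_comp i : i < k -> nth 0 (spine_comp e s) i = #|[set y | spine_index y == i]|.
Proof. by move=> i_lt; rewrite (nth_map x0) // component_leaf_edges. Qed.

Lemma spine_comp_gt0 : all (leq 1) (spine_comp e s).
Proof. by apply/allP => _ /mapP[v _ ->]; apply/card_gt0P; exists v; rewrite inE connect0. Qed.

Lemma spine_edge_inj i j : i < k.-1 -> j < k.-1 -> spine_edge i = spine_edge j -> i = j.
Proof.
move=> /ltn_spine_pred i_lt /ltn_spine_pred j_lt eq_ij.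
have nth_spineE m n : m < k -> n < k -> (nth x0 s m == nth x0 s n) = (m == n).
  by move=> m_lt n_lt; rewrite nth_uniq // spine_uniq.
have [i_le j_le] := (ltnW i_lt, ltnW j_lt).
have : nth x0 s i \in spine_edge j by rewrite -eq_ij set21.
rewrite !inE !nth_spineE // => /orP[/eqP // | /eqP iE]; subst i.
have : nth x0 s j.+2 \in spine_edge j by rewrite -eq_ij set22.
by rewrite !inE !nth_spineE // => /orP[] /eqP; lia.
Qed.

Lemma spine_edge_notin_leaf_edges i : i < k.-1 -> spine_edge i \notin leaf_edges e.
Proof.
move=> /ltn_spine_pred i_lt; apply/negP => /leaf_edgesP[u u_leaf eq_u].
have : u \in spine_edge i by rewrite eq_u set21.
by rewrite !inE => /orP[] /eqP uE; rewrite uE mem_nth ?(ltnW i_lt) in u_leaf.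
Qed.

Lemma spine_edge_cut_edges c i : i < k.-1 -> (spine_edge i \in cut_edges c) = ~~ nth false c i.
Proof.
move=> i_lt; rewrite inE (negbTE (spine_edge_notin_leaf_edges i_lt)) /=.
apply/imsetP/idP => [[j] | ci]; last by exists (Ordinal i_lt); rewrite ?inE.
by rewrite inE => cj /spine_edge_inj ->.
Qed.

Lemma cut_edges_inj c1 c2 : size c1 = k.-1 -> size c2 = k.-1 ->
  cut_edges c1 = cut_edges c2 -> c1 = c2.
Proof.
move=> c1_size c2_size eq_c12; apply: (@eq_from_nth _ false); rewrite c1_size //.
by move=> i i_lt; apply: negb_inj; rewrite -!spine_edge_cut_edges // eq_c12.
Qed.

Lemma spine_edge_edges i : i < k.-1 -> spine_edge i \in edges e.
Proof.
move=> i_lt; apply/imsetP; exists (nth x0 s i, nth x0 s i.+1) => //.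
by have [_ _ _ adj _] := s_spine; rewrite inE adj // ltn_spine_pred.
Qed.

Lemma UL_domain (A : {set {set V}}) :
  (A \subset edges e) && (leaf_edges e \subset A) =
  (A \in [set cut_edges t | t : k.-1.-tuple bool]).
Proof.
apply/idP/imsetP => [/andP[A_edges leaf_A] | [t _ ->]]; last first.
  rewrite leaf_edges_sub_cut_edges andbT; apply/subsetP => f.
  by case/setUP=> [/setIdP[] // | /imsetP[i _ ->]]; apply: spine_edge_edges.
have c_size : size (mkseq (fun i => spine_edge i \notin A) k.-1) == k.-1.
  by rewrite size_mkseq.
exists (Tuple c_size) => //=; apply/setP => f; apply/idP/idP => [f_in | ].
  have /imsetP[[x y]] := subsetP A_edges _ f_in; rewrite inE /= => e_xy fE.
  case: (edge_cases e_xy) => [[i i_lt xyE] | [x_leaf yE] | [y_leaf xE]].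
  - by rewrite fE xyE spine_edge_cut_edges // nth_mkseq // negbK -xyE -fE.
  - by apply/setUP; left; apply/leaf_edgesP; exists x; rewrite // fE yE.
  - by apply/setUP; left; apply/leaf_edgesP; exists y; rewrite // fE xE setUC.
case/setUP=> [/(subsetP leaf_A) // | /imsetP[i]].
by rewrite inE nth_mkseq // negbK => i_in ->.
Qed.

Lemma UL_cut_edges (R : comNzRingType) (x : nat -> R) :
  UL e x = (\sum_(c <- bitseqs k.-1) xA x (cut_edges c))%R.
Proof.
rewrite /UL (eq_bigl _ _ UL_domain) big_imset /= -?big_tuple_bitseqs // => t1 t2 _ _.
by move/cut_edges_inj; rewrite !size_tuple => /(_ erefl erefl)/val_inj.
Qed.

Lemma UL_block_sums (R : comNzRingType) (x : nat -> R) :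
  UL e x = (\sum_(c <- bitseqs k.-1)
    \prod_(j <- iota 0 (count id c).+1) x (block_sum c (nth 0 (spine_comp e s)) k j))%R.
Proof.
rewrite UL_cut_edges; apply: eq_big_seq => c; rewrite mem_bitseqs => /eqP c_size.
rewrite xA_cut_edges // -(big_mkord xpredT (fun j => x #|block_vertices c j|)).
apply: eq_bigr => j _; rewrite card_block_vertices; congr (x _).
by apply: eq_bigr => i _; rewrite nth_spine_comp.
Qed.

Lemma UL_spine_comp (R : comNzRingType) (x : nat -> R) : UL e x = Lpoly x (spine_comp e s).
Proof.
have spine_comp_size : size (spine_comp e s) = k by rewrite size_map.
have := spine_size_gt1; rewrite UL_block_sums -spine_comp_size.
have := spine_comp_gt0; case: (spine_comp e s) => [|a beta] //= /andP[a_gt0 beta_gt0] _.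
rewrite (Lpoly_coarsen x a_gt0 beta_gt0); apply: eq_big_seq => c.
by rewrite mem_bitseqs => /eqP c_size; rewrite (coarsen_block_sums a c_size) big_map.
Qed.

End ProperCaterpillar.

Lemma index_rev (T : eqType) (s : seq T) y : uniq s -> y \in s ->
  index y (rev s) = size s - (index y s).+1.
Proof.
move=> s_uniq y_in; have idx_lt : index y s < size s by rewrite index_mem.
have j_lt : size s - (index y s).+1 < size s by lia.
have nth_j : nth y (rev s) (size s - (index y s).+1) = y.
  by rewrite nth_rev // subnSK // subKn ?nth_index // ltnW.
by rewrite -{1}nth_j index_uniq ?size_rev ?rev_uniq.
Qed.

Lemma is_spine_rev (V : finType) (e : rel V) s :
  symmetric e -> is_spine e s -> is_spine e (rev s).
Proof.
move=> e_sym [s_uniq s_size mem_s s_adj s_adj_index]; split.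
- by rewrite rev_uniq.
- by rewrite size_rev.
- by move=> v; rewrite mem_rev.
- move=> x0 i; rewrite size_rev => i_lt.
  rewrite (nth_rev _ (ltnW i_lt)) (nth_rev _ i_lt) e_sym.
  have -> : size s - i.+1 = (size s - i.+2).+1 by lia.
  by apply: s_adj; lia.
move=> x y; rewrite !mem_rev => x_in y_in e_xy; rewrite !index_rev //.
have := s_adj_index _ _ x_in y_in e_xy.
by have := index_mem x s; have := index_mem y s; rewrite x_in y_in; lia.
Qed.

Theorem proposition2p3 (V : finType) (e : rel V) :
  simple_graph e -> is_tree e -> proper_caterpillar e ->
  forall beta : seq nat, Phi e beta ->
  forall (R : comNzRingType) (x : nat -> R),
    UL e x = Lpoly x beta.
Proof.
move=> [e_sym _] [e_connected _] _ beta [s s_spine beta_s] R x.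
have x0 : V by case: s s_spine {beta_s} => [[_ //] | v _ _]; exact: v.
case: beta_s => ->; first exact: UL_spine_comp.
by rewrite /spine_comp -map_rev; apply: UL_spine_comp => //; apply: is_spine_rev.
Qed.
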